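(* Let $S$ be a numerical semigroup with minimal generating set $P$, $D=S^*+S^*$, $X$ its set of nonzero Apéry elements and $G=G(S)=(V,E)$. For every $u\in V\cap D$ such that $u\neq 2x$ for all $x\in P$, we have $|X\cap D|\le|E|-\deg(u)$.
   Context: A numerical semigroup is a subset $S\subseteq\mathbb N$ containing $0$, closed under addition, with finite complement; $S^*=S\setminus\{0\}$, $m=\min S^*$, $P=S^*\setminus D$. $X=\{s\in S^*: s-m\notin S\}$. The graph $G(S)$ has edge set $E$ consisting of all subsets $\{x,y\}\subseteq X$ ($x=y$ allowed) with $x+y\in X$, and vertex set $V$ the endvertices of these edges. $N_G(x)=\{y\in X: x+y\in X\}$ and $\deg(x)=|N_G(x)|$. *)

From mathcomp Require Import all_boot.
Set Implicit Arguments. Unset Strict Implicit. Unset Printing Implicit Defensive.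

Definition numerical_semigroup (S : pred nat) : Prop :=
  S 0 /\ (forall a b, S a -> S b -> S (a + b)) /\ exists N, forall n, N <= n -> S n.

Definition Sstar (S : pred nat) (x : nat) : bool := (0 < x) && S x.

(* x \in D = S^* + S^*  (a ranges over 1..x; a = x gives x - a = 0 \notin S^* ) *)
Definition inD (S : pred nat) (x : nat) : bool :=
  has (fun a => Sstar S a && Sstar S (x - a)) (iota 1 x).

(* x \in P = S^* \ D  (minimal generating set) *)
Definition inP (S : pred nat) (x : nat) : bool := Sstar S x && ~~ inD S x.

(* x \in X = { s \in S^* : s - m \notin S }, m = min S^*  (every s \in S^* has s >= m,
   so the truncated subtraction is the true one) *)
Definition inX (S : pred nat) (m x : nat) : bool := Sstar S x && ~~ S (x - m).

(* The elements of X below the bound B (B is taken large enough to contain all of X). *)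
Definition Xseq (S : pred nat) (m B : nat) : seq nat := [seq x <- iota 0 B | inX S m x].

(* |E| : unordered pairs {x, y} (x = y allowed) of elements of X with x + y \in X *)
Definition nE (S : pred nat) (m B : nat) : nat :=
  size [seq p <- [seq (x, y) | x <- Xseq S m B, y <- Xseq S m B]
          | (p.1 <= p.2) && inX S m (p.1 + p.2)].

Definition deg (S : pred nat) (m B u : nat) : nat :=
  count (fun y => inX S m (u + y)) (Xseq S m B).

Definition inV (S : pred nat) (m u : nat) : Prop :=
  exists y, [&& inX S m u, inX S m y & inX S m (u + y)].

(** Every [z] in [X ∩ D] is the sum of two elements of [S^*], and the
    hypothesis [u <> 2 x] for [x] in [P] lets us choose them both different
    from [u]; summands of an Apéry element are Apéry elements, so this gives an
    edge of [G(S)] with sum [z] not containing [u].  These edges are pairwise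
    distinct (they have distinct sums) and disjoint from the [deg u] edges
    [{u, y}], which gives [deg u + |X ∩ D|] distinct edges. *)

From mathcomp Require Import all_boot zify.

Set Implicit Arguments.
Unset Strict Implicit.
Unset Printing Implicit Defensive.

Definition edge (x y : nat) : nat * nat := (minn x y, maxn x y).

Lemma edge_sum x y : (edge x y).1 + (edge x y).2 = x + y.
Proof. exact: addn_min_max. Qed.

Lemma edge_sorted x y : (edge x y).1 <= (edge x y).2.
Proof. by rewrite /=; lia. Qed.

Lemma edge_endpointE x y u :
  ((edge x y).1 == u) || ((edge x y).2 == u) = (x == u) || (y == u).
Proof. by rewrite /= /minn /maxn; case: ltnP => _ //; rewrite orbC. Qed.

Definition edges (S : pred nat) (m B : nat) : seq (nat * nat) :=
  [seq p <- [seq (x, y) | x <- Xseq S m B, y <- Xseq S m B]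
     | (p.1 <= p.2) && inX S m (p.1 + p.2)].

Lemma nE_edges S m B : nE S m B = size (edges S m B).
Proof. by []. Qed.

Lemma inX_lt (S : pred nat) m N x :
  (forall n, N <= n -> S n) -> inX S m x -> x < N + m.
Proof.
move=> SN /andP[_ Sxm]; rewrite ltnNge; apply: contra Sxm => le_Nm_x.
by apply: SN; lia.
Qed.

Section EdgeList.

Variables (S : pred nat) (m B : nat).
Hypothesis X_lt : forall x, inX S m x -> x < B.

Lemma mem_Xseq x : (x \in Xseq S m B) = inX S m x.
Proof.
rewrite mem_filter mem_iota /= add0n.
by case Xx: (inX S m x) => //=; rewrite X_lt.
Qed.

Lemma edge_in_edges x y :
  inX S m x -> inX S m y -> inX S m (x + y) -> edge x y \in edges S m B.
Proof.
move=> Xx Xy Xxy; rewrite mem_filter edge_sum Xxy edge_sorted.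
apply: allpairs_f; rewrite mem_Xseq /minn /maxn; by case: ltnP.
Qed.

End EdgeList.

Section NumericalSemigroup.

Variable S : pred nat.
Hypothesis S_add : forall a b, S a -> S b -> S (a + b).

Lemma Sstar_add a b : Sstar S a -> Sstar S b -> Sstar S (a + b).
Proof.
by move=> /andP[a_gt0 Sa] /andP[_ Sb]; rewrite /Sstar S_add // addn_gt0 a_gt0.
Qed.

Lemma inDP x :
  reflect (exists a b, [/\ Sstar S a, Sstar S b & a + b = x]) (inD S x).
Proof.
apply: (iffP hasP) => [[a] | [a [b [Sa Sb <-]]]].
  rewrite mem_iota => a_range /andP[Sa Sxa].
  by exists a, (x - a); split=> //; move: Sxa => /andP[]; lia.
exists a; last by rewrite addKn Sa Sb.
by rewrite mem_iota; move: Sa Sb => /andP[] ? _ /andP[] ? _; lia.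
Qed.

(* If [u = a + a] then [a] is not in [P], so [a = c + d] and [u = c + (a + d)]
   with [c < a < a + d]. *)
Lemma inD_split_neq u : inD S u -> (forall x, inP S x -> u <> 2 * x) ->
  exists c d, [/\ Sstar S c, Sstar S d, c + d = u & c != d].
Proof.
move=> /inDP[a [b [Sa Sb ab_u]]] u_not_double.
have [a_b | a_neq_b] := eqVneq a b; last by exists a, b.
have /inDP[c [d [Sc Sd cd_a]]] : inD S a.
  by apply/negPn/negP => not_Da; apply: (u_not_double a); [rewrite /inP Sa | lia].
exists c, (d + a); split; rewrite ?Sstar_add //; first lia.
by move: Sc Sd => /andP[] ? _ /andP[] ? _; apply/eqP; lia.
Qed.

(* When [z - u] lies in [S^*], split [u = c + d] with [c <> d] and regroup
   [z = c + d + (z - u)] so that neither summand is [u]. *)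
Lemma inD_split_avoid u z : inD S u -> (forall x, inP S x -> u <> 2 * x) ->
  inD S z -> exists a b, [/\ Sstar S a, Sstar S b, a + b = z, a != u & b != u].
Proof.
move=> Du u_not_double /inDP[a [b [Sa Sb ab_z]]].
have [Szu | notSzu] := boolP (Sstar S (z - u)); last first.
  exists a, b; split=> //; apply: contraNneq notSzu => <-.
    by rewrite -ab_z addKn.
  by rewrite -ab_z addnK.
have [c [d [Sc Sd cd_u c_neq_d]]] := inD_split_neq Du u_not_double.
have u_lt_z : u < z by move: Szu => /andP[]; lia.
move: (Sc) (Sd) => /andP[c_gt0 _] /andP[d_gt0 _].
have [zu_c | zu_neq_c] := eqVneq (z - u) c.
  exists d, (c + c); split; rewrite ?Sstar_add //; apply/eqP; lia.
exists c, (d + (z - u)); split; rewrite ?Sstar_add //; apply/eqP; lia.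
Qed.

Variable m : nat.
Hypothesis m_min : forall s, 0 < s -> S s -> m <= s.

Lemma inX_summand a b : inX S m (a + b) -> Sstar S a -> Sstar S b -> inX S m a.
Proof.
move=> /andP[_ notSabm] Sa /andP[_ Sb]; rewrite /inX Sa /=.
apply: contra notSabm => Sam; have m_le_a := m_min (andP Sa).1 (andP Sa).2.
by rewrite (_ : a + b - m = a - m + b) ?S_add //; lia.
Qed.

Variable u : nat.
Hypotheses (Du : inD S u) (u_not_double : forall x, inP S x -> u <> 2 * x).

Definition avoiding_split (z a : nat) : bool :=
  [&& inX S m a, inX S m (z - a), a != u & z - a != u].

Definition split_point (z : nat) : nat := find (avoiding_split z) (iota 0 z).

Lemma split_pointP z : inX S m z -> inD S z ->
  [/\ split_point z <= z, inX S m (split_point z), inX S m (z - split_point z),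
      split_point z != u & z - split_point z != u].
Proof.
move=> Xz Dz.
have [a [b [Sa Sb ab_z a_neq_u b_neq_u]]] := inD_split_avoid Du u_not_double Dz.
have has_split : has (avoiding_split z) (iota 0 z).
  apply/hasP; exists a; first by rewrite mem_iota; move: Sb => /andP[]; lia.
  rewrite /avoiding_split (_ : z - a = b) ?a_neq_u ?b_neq_u; last by lia.
  by rewrite -ab_z in Xz; rewrite (inX_summand Xz) // (inX_summand _ Sb Sa) // addnC.
have := nth_find 0 has_split; rewrite has_find size_iota in has_split.
by rewrite nth_iota // add0n => /and4P[*]; split=> //; apply: ltnW.
Qed.

Lemma count_XD_add_deg_le B : (forall x, inX S m x -> x < B) -> inX S m u ->
  count (inD S) (Xseq S m B) + deg S m B u <= nE S m B.
Proof.
move=> X_lt Xu; set X := Xseq S m B.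
pose split_edge z := edge (split_point z) (z - split_point z).
have split_edgeP z : z \in [seq z <- X | inD S z] ->
  [/\ (split_edge z).1 + (split_edge z).2 = z,
      ((split_edge z).1 == u) || ((split_edge z).2 == u) = false
    & split_edge z \in edges S m B].
  rewrite mem_filter mem_Xseq // => /andP[Dz Xz].
  have [le_az Xa Xza a_neq_u za_neq_u] := split_pointP Xz Dz.
  rewrite edge_sum edge_endpointE (negbTE a_neq_u) (negbTE za_neq_u) subnKC //.
  by split=> //; apply: edge_in_edges; rewrite ?subnKC.
set s1 := [seq split_edge z | z <- [seq z <- X | inD S z]].
set s2 := [seq edge u y | y <- [seq y <- X | inX S m (u + y)]].
have -> : count (inD S) X + deg S m B u = size (s1 ++ s2).
  by rewrite size_cat !size_map !size_filter.
rewrite nE_edges; apply: uniq_leq_size.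
  rewrite cat_uniq; apply/and3P; split.
  - rewrite map_inj_in_uniq ?filter_uniq ?iota_uniq // => z1 z2.
    by move=> /split_edgeP[sum1 _ _] /split_edgeP[sum2 _ _] e; rewrite -sum1 -sum2 e.
  - apply/hasPn => _ /mapP[y _ ->]; apply/negP => /mapP[z /split_edgeP[_ no_u _] e].
    by move: no_u; rewrite -e edge_endpointE eqxx.
  - rewrite map_inj_in_uniq ?filter_uniq ?iota_uniq // => y1 y2 _ _ e.
    by move: (edge_sum u y1); rewrite e edge_sum => /addnI.
move=> p; rewrite mem_cat => /orP[/mapP[z /split_edgeP[_ _ ?] ->] // | /mapP[y]].
by rewrite mem_filter mem_Xseq // => /andP[Xuy Xy] ->; apply: edge_in_edges.
Qed.

End NumericalSemigroup.

Theorem proposition4p16 (S : pred nat) (m N u : nat) :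
  numerical_semigroup S ->
  (* m = min S^* *)
  0 < m -> S m -> (forall s, 0 < s -> S s -> m <= s) ->
  (* every integer >= N lies in S, so X \subseteq [0, N + m) *)
  (forall n, N <= n -> S n) ->
  inV S m u -> inD S u ->
  (forall x, inP S x -> u <> 2 * x) ->
  (* |X \cap D| <= |E| - deg(u) *)
  count (inD S) (Xseq S m (N + m)) + deg S m (N + m) u <= nE S m (N + m).
Proof.
move=> [_ [S_add _]] _ _ m_min SN [_ /and3P[Xu _ _]] Du u_not_double.
apply: count_XD_add_deg_le => // x; exact: inX_lt.
Qed.
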